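(* There exists a constant $\delta_0>0$ such that the following holds. If $\|\mathcal T-\mathcal S\|_{\mathrm{op}}\le \delta_0$, then every local minimizer $x^+$ of $f$ corresponds to a vector of the form $x=x^\natural e^{i\theta}$ for some $\theta\in[0,2\pi)$ (and these points are global minimizers of $f$), and every saddle point of $f$ is strict, i.e. at every critical point of $f$ that is not a local minimizer the Hessian of $f$ has a strictly negative eigenvalue.
   Context: Let $n,m\ge 1$, $a_1,\dots,a_m\in\mathbb C^n$ and $x^\natural\in\mathbb C^n$. For $a,b\in\mathbb C^n$ write $\langle a,b\rangle=\sum_{j}a_j\overline{b_j}$ and let $\|\cdot\|$ be the Euclidean norm. Let $y_i=|\langle a_i,x^\natural\rangle|^2$. For $v\in\mathbb C^n$ put $v^+=(\mathrm{Re}\,v,\mathrm{Im}\,v)\in\mathbb R^{2n}$ and $v^-=Mv^+=(-\mathrm{Im}\,v,\mathrm{Re}\,v)$, where $M=\begin{bmatrix}0&-I_n\\ I_n&0\end{bmatrix}$. The map $x\mapsto x^+$ identifies $\mathbb C^n$ with $\mathbb R^{2n}$, and $x$ and $x^+$ always correspond to each other. Define $f:\mathbb R^{2n}\to\mathbb R$ by $f(x^+)=\sum_{i=1}^m\big(|\langle a_i,x\rangle|^2-y_i\big)^2=\sum_{i=1}^m\big(\langle A_ix^+,x^+\rangle-y_i\big)^2$ with $A_i=a_i^+(a_i^+)^{T}+a_i^-(a_i^-)^{T}$; gradients and Hessians are taken with respect to $x^+\in\mathbb R^{2n}$. Fix $\sigma>0$ (in the paper, $\sigma^2=\mathrm{Var}((a_i^+)_1)$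 for random measurement vectors) and set $c=m\sigma^4$. Define the order-4 tensors on $\mathbb R^{2n}$: $\mathcal T=\frac1c\sum_{i=1}^m(a_i^+)^{\otimes 4}$ and $\mathcal S_{i_1i_2i_3i_4}=\mathbf 1_{i_1=i_2,\,i_3=i_4}+\mathbf 1_{i_1=i_3,\,i_2=i_4}+\mathbf 1_{i_1=i_4,\,i_2=i_3}$ for $1\le i_1,i_2,i_3,i_4\le 2n$. The inner product of tensors is the sum of entrywise products, and $\|\mathcal R\|_{\mathrm{op}}=\sup\{\langle \mathcal R,u_1\otimes u_2\otimes u_3\otimes u_4\rangle:\ u_j\in\mathbb R^{2n},\ \|u_1\|\|u_2\|\|u_3\|\|u_4\|=1\}$. *)

From HB Require Import structures.
From mathcomp Require Import all_boot all_order all_algebra.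
From mathcomp Require Import all_classical all_reals all_analysis.
From mathcomp Require Import complex.
Set Implicit Arguments. Unset Strict Implicit. Unset Printing Implicit Defensive.
Import Order.TTheory GRing.Theory Num.Theory.
Import numFieldNormedType.Exports.
Local Open Scope classical_set_scope.
Local Open Scope ring_scope.

Section PhaseRetrieval.
Variable R : realType.

Definition vplus n (v : 'rV[R[i]]_n) : 'rV[R]_(n + n) :=
  row_mx (map_mx (@complex.Re R) v) (map_mx (@complex.Im R) v).

Definition vminus n (v : 'rV[R[i]]_n) : 'rV[R]_(n + n) :=
  row_mx (map_mx (fun z => - complex.Im z) v) (map_mx (@complex.Re R) v).

Definition cinner n (a b : 'rV[R[i]]_n) : R[i] :=
  \sum_(j < n) a 0 j * conjc (b 0 j).

Definition csqnorm (z : R[i]) : R := complex.Re z ^+ 2 + complex.Im z ^+ 2.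

(* A_i = a^+ (a^+)^T + a^- (a^-)^T  (row-vector convention) *)
Definition Amat n (a : 'rV[R[i]]_n) : 'M[R]_(n + n) :=
  (vplus a)^T *m vplus a + (vminus a)^T *m vminus a.

Definition qform N (A : 'M[R]_N) (u : 'rV[R]_N) : R := (u *m A *m u^T) 0 0.

Definition fobj n m (a : 'I_m -> 'rV[R[i]]_n) (xnat : 'rV[R[i]]_n)
  (u : 'rV[R]_(n + n)) : R :=
  \sum_(i < m) (qform (Amat (a i)) u - csqnorm (cinner (a i) xnat)) ^+ 2.

Definition tensor4 N := 'I_N -> 'I_N -> 'I_N -> 'I_N -> R.

Definition Ttensor n m (a : 'I_m -> 'rV[R[i]]_n) (sigma : R) : tensor4 (n + n) :=
  fun i1 i2 i3 i4 => (m%:R * sigma ^+ 4)^-1 *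
    \sum_(i < m) (vplus (a i) 0 i1 * vplus (a i) 0 i2 *
                  vplus (a i) 0 i3 * vplus (a i) 0 i4).

Definition Stensor N : tensor4 N :=
  fun i1 i2 i3 i4 => ((i1 == i2) && (i3 == i4))%:R
                   + ((i1 == i3) && (i2 == i4))%:R
                   + ((i1 == i4) && (i2 == i3))%:R.

Definition tsub N (T1 T2 : tensor4 N) : tensor4 N :=
  fun i1 i2 i3 i4 => T1 i1 i2 i3 i4 - T2 i1 i2 i3 i4.

Definition tinner N (T1 T2 : tensor4 N) : R :=
  \sum_(i1 < N) \sum_(i2 < N) \sum_(i3 < N) \sum_(i4 < N)
    T1 i1 i2 i3 i4 * T2 i1 i2 i3 i4.

Definition touter N (u1 u2 u3 u4 : 'rV[R]_N) : tensor4 N :=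
  fun i1 i2 i3 i4 => u1 0 i1 * u2 0 i2 * u3 0 i3 * u4 0 i4.

Definition enorm N (u : 'rV[R]_N) : R := Num.sqrt (\sum_(j < N) u 0 j ^+ 2).

Definition opnorm N (T : tensor4 N) : R :=
  sup [set t : R | exists u1 u2 u3 u4 : 'rV[R]_N,
         enorm u1 * enorm u2 * enorm u3 * enorm u4 = 1 /\
         t = tinner T (touter u1 u2 u3 u4)].

Definition local_minimizer N (f : 'rV[R]_N -> R) (u : 'rV[R]_N) : Prop :=
  \forall v \near u, f u <= f v.

Definition global_minimizer N (f : 'rV[R]_N -> R) (u : 'rV[R]_N) : Prop :=
  forall v, f u <= f v.

Definition evec N (j : 'I_N) : 'rV[R]_N := delta_mx 0 j.

Definition gradient N (f : 'rV[R]_N -> R) (u : 'rV[R]_N) : 'rV[R]_N :=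
  \row_(j < N) 'D_(evec j) f u.

Definition hessian N (f : 'rV[R]_N -> R) (u : 'rV[R]_N) : 'M[R]_N :=
  \matrix_(i < N, j < N) 'D_(evec j) (fun w => 'D_(evec i) f w) u.

Definition critical_point N (f : 'rV[R]_N -> R) (u : 'rV[R]_N) : Prop :=
  gradient f u = 0.

End PhaseRetrieval.

From HB Require Import structures.
From mathcomp Require Import all_boot all_order all_algebra.
From mathcomp Require Import all_classical all_reals all_analysis.
From mathcomp Require Import complex.
From mathcomp Require Import ring lra.
Import Order.TTheory GRing.Theory Num.Theory.
Import numFieldNormedType.Exports.
Local Open Scope ring_scope.
Set Implicit Arguments. Unset Strict Implicit. Unset Printing Implicit Defensive.

(* With p_i = a_i^+ and v = (x♮)^+, f is a quartic polynomial in x^+, so its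
   gradient and Hessian are read off its restrictions to lines.  The
   hypothesis ||T - S||_op <= 1/100 says that the empirical fourth moments
   sum_i prod_k <p_i, x_k> / c are within 1/100 prod_k |x_k| of the Gaussian ones.
   Let u be a critical point and w = (e^(i theta) x♮)^+ the phase of x♮ with
   <u, M w> = 0 <= <u, w>.  If u <> w, put X = |u - w|^2 and Y = |u + w|^2: the
   moment bounds make the second-order term of f at u negative in the direction
   u - w when 8 X <= 5 Y, and in the direction w otherwise.  So a critical point is
   either a phase of x♮, where f vanishes, or a point where the (symmetric)
   Hessian takes a negative value, hence has a negative eigenvalue: the infimum of
   its Rayleigh quotient. *)

Section Dot.
Variable R : realDomainType.
Implicit Types (k : nat).

Definition dot k (x y : 'rV[R]_k) : R := \sum_(j < k) x 0 j * y 0 j.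

Lemma dotC k (x y : 'rV[R]_k) : dot x y = dot y x.
Proof. by apply: eq_bigr => j _; rewrite mulrC. Qed.

Lemma dotDl k (x y z : 'rV[R]_k) : dot (x + y) z = dot x z + dot y z.
Proof. by rewrite /dot -big_split; apply: eq_bigr => j _; rewrite mxE mulrDl. Qed.

Lemma dotZl k a (x z : 'rV[R]_k) : dot (a *: x) z = a * dot x z.
Proof. by rewrite /dot mulr_sumr; apply: eq_bigr => j _; rewrite mxE mulrA. Qed.

Lemma dotNl k (x z : 'rV[R]_k) : dot (- x) z = - dot x z.
Proof. by rewrite -scaleN1r dotZl mulN1r. Qed.

Lemma dotBl k (x y z : 'rV[R]_k) : dot (x - y) z = dot x z - dot y z.
Proof. by rewrite dotDl dotNl. Qed.

Lemma dotDr k (x y z : 'rV[R]_k) : dot z (x + y) = dot z x + dot z y.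
Proof. by rewrite dotC dotDl !(dotC z). Qed.

Lemma dotZr k a (x z : 'rV[R]_k) : dot z (a *: x) = a * dot z x.
Proof. by rewrite dotC dotZl dotC. Qed.

Lemma dotNr k (x z : 'rV[R]_k) : dot z (- x) = - dot z x.
Proof. by rewrite dotC dotNl dotC. Qed.

Lemma dotBr k (x y z : 'rV[R]_k) : dot z (x - y) = dot z x - dot z y.
Proof. by rewrite dotDr dotNr. Qed.

Lemma dot0l k (z : 'rV[R]_k) : dot 0 z = 0.
Proof. by rewrite -(scale0r 0) dotZl mul0r. Qed.

Lemma dot_ge0 k (x : 'rV[R]_k) : 0 <= dot x x.
Proof. by apply: sumr_ge0 => j _; rewrite -expr2 sqr_ge0. Qed.

Lemma dot_eq0 k (x : 'rV[R]_k) : (dot x x == 0) = (x == 0).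
Proof.
apply/idP/eqP => [|->]; last by rewrite dot0l.
rewrite psumr_eq0 => [/allP x0|j _]; last by rewrite -expr2 sqr_ge0.
apply/rowP => j; have /implyP := x0 j (mem_index_enum j).
by rewrite mxE -expr2 sqrf_eq0 => /(_ isT)/eqP.
Qed.

Lemma dot_gt0 k (x : 'rV[R]_k) : (0 < dot x x) = (x != 0).
Proof. by rewrite lt_def dot_ge0 dot_eq0 andbT. Qed.

Lemma sqr_entry_le_dot k (x : 'rV[R]_k) i : x 0 i ^+ 2 <= dot x x.
Proof.
rewrite /dot (bigD1 i) //= -expr2 lerDl.
by apply: sumr_ge0 => j _; rewrite -expr2 sqr_ge0.
Qed.

Lemma dot_row_mx k1 k2 (x y : 'rV[R]_(k1 + k2)) :
  dot x y = dot (lsubmx x) (lsubmx y) + dot (rsubmx x) (rsubmx y).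
Proof.
by rewrite /dot big_split_ord; congr (_ + _); apply: eq_bigr => j _; rewrite !mxE.
Qed.

Lemma mx11_dot k (x y : 'rV[R]_k) : (x *m y^T) 0 0 = dot x y.
Proof. by rewrite mxE; apply: eq_bigr => j _; rewrite mxE. Qed.

End Dot.

Section RotJ.
Variables (R : realDomainType) (n : nat).
Implicit Types (x y : 'rV[R]_(n + n)).

(* The matrix M of the paper: multiplication by i in the coordinates (Re, Im). *)
Definition rotJ x : 'rV[R]_(n + n) := row_mx (- rsubmx x) (lsubmx x).

Lemma lsub_rotJ x : lsubmx (rotJ x) = - rsubmx x. Proof. by rewrite row_mxKl. Qed.
Lemma rsub_rotJ x : rsubmx (rotJ x) = lsubmx x. Proof. by rewrite row_mxKr. Qed.

Lemma rotJD x y : rotJ (x + y) = rotJ x + rotJ y.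
Proof. by rewrite /rotJ add_row_mx !linearD /= ?opprD. Qed.

Lemma rotJZ a x : rotJ (a *: x) = a *: rotJ x.
Proof. by rewrite /rotJ scale_row_mx !linearZ /= scalerN. Qed.

Lemma rotJN x : rotJ (- x) = - rotJ x.
Proof. by rewrite -scaleN1r rotJZ scaleN1r. Qed.

Lemma rotJB x y : rotJ (x - y) = rotJ x - rotJ y.
Proof. by rewrite rotJD rotJN. Qed.

Lemma rotJK x : rotJ (rotJ x) = - x.
Proof. by rewrite /rotJ lsub_rotJ rsub_rotJ -opp_row_mx hsubmxK. Qed.

Lemma dot_rotJ x y : dot (rotJ x) (rotJ y) = dot x y.
Proof.
by rewrite dot_row_mx !lsub_rotJ !rsub_rotJ dotNl dotNr opprK addrC -dot_row_mx.
Qed.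

Lemma dot_rotJl x y : dot (rotJ x) y = - dot x (rotJ y).
Proof.
rewrite (dot_row_mx (rotJ x)) (dot_row_mx x) !lsub_rotJ !rsub_rotJ dotNl dotNr.
by rewrite (dotC (rsubmx x)) opprD opprK addrC.
Qed.

Lemma dot_rotJ_self x : dot x (rotJ x) = 0.
Proof.
have := dot_rotJl x x; rewrite dotC => /eqP; rewrite -subr_eq0 opprK -mulr2n.
by rewrite mulrn_eq0 => /eqP.
Qed.

End RotJ.

Lemma dot_phase (R : realDomainType) n (u v : 'rV[R]_(n + n)) c s :
  dot u (c *: v + s *: rotJ v) = c * dot u v + s * dot u (rotJ v) /\
  dot u (rotJ (c *: v + s *: rotJ v)) = c * dot u (rotJ v) - s * dot u v.
Proof.
split; first by rewrite dotDr !dotZr.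
by rewrite rotJD !rotJZ rotJK dotDr !dotZr dotNr mulrN.
Qed.

Lemma phase_align (R : rcfType) n (u v : 'rV[R]_(n + n)) :
  exists c s : R, [/\ c ^+ 2 + s ^+ 2 = 1,
    dot u (rotJ (c *: v + s *: rotJ v)) = 0 & 0 <= dot u (c *: v + s *: rotJ v)].
Proof.
set al := dot u v; set be := dot u (rotJ v).
have [r0|r_neq0] := eqVneq (al ^+ 2 + be ^+ 2) 0.
  move: r0 => /eqP; rewrite paddr_eq0 ?sqr_ge0 // !sqrf_eq0 => /andP[/eqP al0 /eqP be0].
  exists 1, 0; have [-> ->] := dot_phase u v 1 0.
  by rewrite -/al -/be al0 be0 expr1n expr0n /= addr0 !mulr0 subrr addr0.
have r_gt0 : 0 < al ^+ 2 + be ^+ 2 by rewrite lt_def r_neq0 addr_ge0 ?sqr_ge0.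
set r := Num.sqrt (al ^+ 2 + be ^+ 2).
have sr_neq0 : r != 0 by rewrite gt_eqF // sqrtr_gt0.
have rr : r ^+ 2 = al ^+ 2 + be ^+ 2 by rewrite sqr_sqrtr // ltW.
exists (al / r), (be / r); have [-> ->] := dot_phase u v (al / r) (be / r).
rewrite -/al -/be; split.
- by rewrite !expr_div_n -mulrDl -rr mulfV // expf_neq0.
- by ring.
- have -> : al / r * al + be / r * be = r ^+ 2 / r by rewrite rr; ring.
  by rewrite divr_ge0 ?sqr_ge0 ?sqrtr_ge0.
Qed.

Lemma cos_sin_surj (R : realType) (c s : R) : c ^+ 2 + s ^+ 2 = 1 ->
  exists theta : R, [/\ 0 <= theta < 2 * pi, cos theta = c & sin theta = s].
Proof.
move=> cs1; have c2_le1 : c ^+ 2 <= 1 by rewrite -cs1 lerDl sqr_ge0.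
have c_in : -1 <= c <= 1 by rewrite -ler_norml -(expr_le1 (n := 2)) // real_normK ?num_real.
have sqrt_s : Num.sqrt (1 - c ^+ 2) = `|s| by rewrite -cs1 addrC addKr sqrtr_sqr.
have pi_gt0 := pi_gt0 R; have acos_le := acos_lepi c_in.
have [s_ge0|s_lt0] := leP 0 s.
  exists (acos c); split; [|exact: acosK|].
  - by rewrite acos_ge0 //=; lra.
  - by rewrite sin_acos // sqrt_s ger0_norm.
exists (2 * pi - acos c); split.
- have acos_gt0 : 0 < acos c.
    apply: acos_gt0; rewrite (andP c_in).1 /= lt_neqAle (andP c_in).2 andbT.
    apply: contraTneq s_lt0 => c1; move: cs1; rewrite c1 expr1n.
    by move=> /eqP; rewrite -subr_eq0 addrC addKr sqrf_eq0 => /eqP ->; rewrite ltxx.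
  by apply/andP; split; lra.
- by rewrite cosB mulr_natl cos2pi sin2pi mul1r mul0r addr0 acosK.
- rewrite sinB mulr_natl cos2pi sin2pi mul1r mul0r sin_acos // sqrt_s.
  by rewrite ltr0_norm // sub0r opprK.
Qed.

Section ComplexCoordinates.
Variables (R : realType) (n : nat).
Implicit Types (a x : 'rV[R[i]]_n) (u : 'rV[R]_(n + n)).

Lemma vminus_rotJ a : vminus a = rotJ (vplus a).
Proof.
rewrite /vminus /rotJ /vplus row_mxKl row_mxKr; congr row_mx.
by apply/rowP => j; rewrite !mxE.
Qed.

Lemma qform_Amat a u :
  qform (Amat a) u = dot u (vplus a) ^+ 2 + dot u (vminus a) ^+ 2.
Proof.
have quad p : (u *m (p^T *m p) *m u^T) 0 0 = dot u p ^+ 2.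
  rewrite -!mulmxA !mulmxA -(mulmxA (u *m p^T)) mxE big_ord1 !mx11_dot.
  by rewrite (dotC p) expr2.
by rewrite /qform /Amat mulmxDr mulmxDl mxE !quad.
Qed.

Lemma csqnorm_cinner a x :
  csqnorm (cinner a x) =
  dot (vplus a) (vplus x) ^+ 2 + dot (vplus a) (rotJ (vplus x)) ^+ 2.
Proof.
rewrite /csqnorm /cinner !dot_row_mx lsub_rotJ rsub_rotJ /vplus.
rewrite !row_mxKl !row_mxKr /dot -!big_split.
rewrite (raddf_sum (@complex.Re R)) (raddf_sum (@complex.Im R)).
congr (_ ^+ 2 + _ ^+ 2); apply: eq_bigr => j _; rewrite !mxE;
  by case: (a 0 j) => ? ?; case: (x 0 j) => ? ? /=; ring.
Qed.

Lemma vplusZ (c s : R) x :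
  vplus (Complex c s *: x) = c *: vplus x + s *: rotJ (vplus x).
Proof.
rewrite /rotJ /vplus row_mxKl row_mxKr !scale_row_mx add_row_mx.
by congr row_mx; apply/rowP => j; rewrite !mxE; case: (x 0 j) => ? ? /=; ring.
Qed.

End ComplexCoordinates.

Section SymmetricForm.
Variables (R : rcfType) (k : nat).
Implicit Types (A : 'M[R]_k) (x y : 'rV[R]_k).

Definition bil A x y : R := (x *m A *m y^T) 0 0.

Lemma bilDl A x1 x2 y : bil A (x1 + x2) y = bil A x1 y + bil A x2 y.
Proof. by rewrite /bil !mulmxDl mxE. Qed.

Lemma bilZl A a x y : bil A (a *: x) y = a * bil A x y.
Proof. by rewrite /bil -!scalemxAl mxE. Qed.

Lemma bilNl A x y : bil A (- x) y = - bil A x y.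
Proof. by rewrite -scaleN1r bilZl mulN1r. Qed.

Lemma bil0l A y : bil A 0 y = 0.
Proof. by rewrite -(scale0r 0) bilZl mul0r. Qed.

Lemma bilC A x y : A^T = A -> bil A x y = bil A y x.
Proof.
move=> sA; rewrite /bil; transitivity ((x *m A *m y^T)^T 0 0).
  by rewrite [RHS]mxE.
by rewrite !trmx_mul trmxK sA mulmxA.
Qed.

Lemma bil_sub_scalar A mu x : bil (A - mu%:M) x x = bil A x x - mu * dot x x.
Proof.
rewrite /bil mulmxBr mulmxBl mul_mx_scalar -scalemxAl mxE.
by congr (_ + _); rewrite 2!mxE mx11_dot.
Qed.

Lemma linear_expand (phi : 'rV[R]_k -> R) :
  (forall x y, phi (x + y) = phi x + phi y) -> (forall a x, phi (a *: x) = a * phi x) ->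
  forall x, phi x = \sum_(j < k) x 0 j * phi (delta_mx 0 j).
Proof.
move=> phiD phiZ x; rewrite {1}(row_sum_delta x).
elim/big_rec2: _ => [|j a b _ <-]; last by rewrite phiD phiZ.
by rewrite -(scale0r 0) phiZ mul0r.
Qed.

Lemma bil_matrix (B : 'rV[R]_k -> 'rV[R]_k -> R) x y :
  (forall x1 x2 y, B (x1 + x2) y = B x1 y + B x2 y) ->
  (forall a x y, B (a *: x) y = a * B x y) ->
  (forall x y, B x y = B y x) ->
  bil (\matrix_(i, j) B (delta_mx 0 i) (delta_mx 0 j)) x y = B x y.
Proof.
move=> BDl BZl BC.
have BDr x1 y1 y2 : B x1 (y1 + y2) = B x1 y1 + B x1 y2 by rewrite !(BC x1) BDl.
have BZr a x1 y1 : B x1 (a *: y1) = a * B x1 y1 by rewrite !(BC x1) BZl.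
rewrite (@linear_expand (B^~ y)) //.
under [RHS]eq_bigr do rewrite (@linear_expand (B _)) // mulr_sumr.
rewrite /bil mxE exchange_big; apply: eq_bigr => j _.
rewrite !mxE mulr_suml; apply: eq_bigr => i _; rewrite !mxE; ring.
Qed.

Lemma bil_unit_bound A x :
  dot x x = 1 -> `|bil A x x| <= \sum_(j < k) \sum_(i < k) `|A i j|.
Proof.
move=> x1; have entry_le1 i : `|x 0 i| <= 1.
  by rewrite -(expr_le1 (n := 2)) // real_normK ?num_real // -x1 sqr_entry_le_dot.
rewrite /bil mxE; apply: (le_trans (ler_norm_sum _ _ _)); apply: ler_sum => j _.
rewrite !mxE mulr_suml; apply: (le_trans (ler_norm_sum _ _ _)); apply: ler_sum => i _.
rewrite !normrM mulrAC; apply: ler_piMl; first exact: normr_ge0.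
by rewrite mulr_ile1 ?normr_ge0.
Qed.

Lemma bilZZ A a x : bil A (a *: x) (a *: x) = a ^+ 2 * bil A x x.
Proof. by rewrite bilZl /bil linearZ /= -scalemxAr mxE mulrA -expr2. Qed.

Lemma normalize_dir x : x != 0 ->
  exists2 y, dot y y = 1 & forall A, bil A x x = dot x x * bil A y y.
Proof.
rewrite -dot_gt0 => x_gt0; have := sqrtr_gt0 (dot x x); rewrite x_gt0 => r_gt0.
exists ((Num.sqrt (dot x x))^-1 *: x) => [|A].
  rewrite dotZl dotZr mulrA -expr2 exprVn sqr_sqrtr ?ltW // mulVf //.
  by rewrite gt_eqF.
by rewrite bilZZ exprVn sqr_sqrtr ?ltW // mulrA mulfV ?gt_eqF // mul1r.
Qed.

Lemma bil_comb A t x y : A^T = A ->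
  bil A (t *: x - y) (t *: x - y) = t ^+ 2 * bil A x x - 2 * t * bil A x y + bil A y y.
Proof.
move=> sA; have bilDr z y1 y2 : bil A z (y1 + y2) = bil A z y1 + bil A z y2.
  by rewrite !(bilC z) // bilDl.
have bilZr a z y1 : bil A z (a *: y1) = a * bil A z y1 by rewrite !(bilC z) // bilZl.
rewrite bilDl !bilDr bilNl !bilZl -scaleN1r !bilZr bilZl (bilC y) //; ring.
Qed.

Lemma psd_unit_lower_bound A : A^T = A -> A \in unitmx ->
  (forall x, 0 <= bil A x x) ->
  exists2 eps, 0 < eps & forall x, dot x x = 1 -> eps <= bil A x x.
Proof.
move=> sA uA psd; set B := invmx A; set K := \sum_(j < k) \sum_(i < k) `|B i j|.
have sB : B^T = B by rewrite /B trmx_inv sA.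
have K_ge0 : 0 <= K by do 2![apply: sumr_ge0 => ? _].
have K1_gt0 : 0 < K + 1 by rewrite ltr_wpDl.
(* With y = x A^-1, 0 <= bil A (t x - y) (t x - y) = t^2 bil A x x - 2 t + bil B x x
   at t = K + 1. *)
exists ((K + 2) / (K + 1) ^+ 2) => [|x x1]; first by rewrite divr_gt0 ?exprn_gt0 ?ltr_wpDl.
set y := x *m B.
have Axy : bil A x y = 1.
  by rewrite /bil /y trmx_mul sB mulmxA -(mulmxA x) mulmxV // mulmx1 mx11_dot.
have Ayy : bil A y y = bil B x x.
  by rewrite /bil /y trmx_mul sB -!mulmxA (mulmxA B) mulVmx // mul1mx !mulmxA.
have BK : bil B x x <= K by have := bil_unit_bound B x1; rewrite ler_norml => /andP[].
have := psd ((K + 1) *: x - y); rewrite bil_comb // Axy Ayy => comb_ge0.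
rewrite ler_pdivrMr ?exprn_gt0 //; nra.
Qed.

End SymmetricForm.

Section NegativeEigenvalue.
Variables (R : realType) (k : nat).
Implicit Types (A : 'M[R]_k) (x : 'rV[R]_k).

Lemma neg_eigenvalue A : A^T = A -> (exists x, bil A x x < 0) ->
  exists2 lambda, lambda < 0 & eigenvalue A lambda.
Proof.
move=> sA [x0 Ax0_lt0].
have x0_neq0 : x0 != 0 by apply: contraTneq Ax0_lt0 => ->; rewrite bil0l ltxx.
have [y0 y0_1 y0E] := normalize_dir x0_neq0.
pose E := [set t : R | exists2 x, dot x x = 1 & t = bil A x x]%classic.
have infE : has_inf E.
  split; first by exists (bil A y0 y0), y0.
  exists (- \sum_(j < k) \sum_(i < k) `|A i j|) => _ [x x1 ->].
  by have := bil_unit_bound A x1; rewrite ler_norml => /andP[].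
set mu := inf E.
have mu_le x : dot x x = 1 -> mu <= bil A x x.
  by move=> x1; apply: ge_inf; [case: infE | exists x].
have mu_lt0 : mu < 0.
  apply: le_lt_trans (mu_le _ y0_1) _.
  by move: Ax0_lt0; rewrite y0E pmulr_rlt0 // dot_gt0.
(* A - mu is positive semidefinite; were it invertible, psd_unit_lower_bound would
   push the infimum mu of the Rayleigh quotient up. *)
exists mu => //; set A' := A - mu%:M.
have psd x : 0 <= bil A' x x.
  have [->|x_neq0] := eqVneq x 0; first by rewrite bil0l.
  have [y y1 ->] := normalize_dir x_neq0.
  rewrite bil_sub_scalar y1 mulr1 mulr_ge0 ?dot_ge0 // subr_ge0.
  exact: mu_le.
rewrite /eigenvalue /eigenspace -/A' kermx_eq0 row_free_unit.
apply/negP => uA'; have sA' : A'^T = A' by rewrite /A' linearB /= tr_scalar_mx sA.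
have [eps eps_gt0 epsP] := psd_unit_lower_bound sA' uA' psd.
have [_ [z z1 ->] Az_lt] := inf_adherent eps_gt0 infE.
by move: (epsP z z1); rewrite bil_sub_scalar z1 mulr1; lra.
Qed.

End NegativeEigenvalue.

(* E <g, x1> <g, x2> <g, x3> <g, x4> for a standard Gaussian vector g (Isserlis). *)
Definition isserlis4 (R : realDomainType) k (x1 x2 x3 x4 : 'rV[R]_k) : R :=
  dot x1 x2 * dot x3 x4 + dot x1 x3 * dot x2 x4 + dot x1 x4 * dot x2 x3.

Section Loss.
Variables (R : realDomainType) (n m : nat).
Local Notation N := (n + n)%N.
Variables (p : 'I_m -> 'rV[R]_N) (v : 'rV[R]_N).
Implicit Types (x y u w d e : 'rV[R]_N).
Local Notation P i x := (dot (p i) x).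
Local Notation J := (@rotJ R n).

(* p i and v stand for a_i^+ and (x♮)^+, so that meas i x = |<a_i, x>|^2 and
   loss is f (fobj_loss).  Along a line,
   loss (h d + x) = loss x + h dloss x d + h^2 d2loss x d + O(h^3):
   d2loss is HALF the second directional derivative, hess the Hessian form. *)
Definition meas i x := P i x ^+ 2 + P i (J x) ^+ 2.
Definition resid i x := meas i x - meas i v.
Definition polar i x d := 2 * (P i x * P i d + P i (J x) * P i (J d)).
Definition loss x := \sum_(i < m) resid i x ^+ 2.
Definition dloss x d := \sum_(i < m) 2 * resid i x * polar i x d.
Definition d2loss x d := \sum_(i < m) (polar i x d ^+ 2 + 2 * resid i x * meas i d).
Definition hess x e d :=
  \sum_(i < m) 2 * (polar i x e * polar i x d + resid i x * polar i e d).

Lemma meas_shift i h d x :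
  meas i (h *: d + x) = meas i x + h * polar i x d + h ^+ 2 * meas i d.
Proof. by rewrite /meas /polar rotJD rotJZ !dotDr !dotZr; ring. Qed.

Lemma polar_shift i h e x d : polar i (h *: e + x) d = polar i x d + h * polar i e d.
Proof. by rewrite /polar rotJD rotJZ !dotDr !dotZr; ring. Qed.

Lemma meas_rot i c s x : meas i (c *: x + s *: J x) = (c ^+ 2 + s ^+ 2) * meas i x.
Proof. by rewrite /meas rotJD !rotJZ rotJK !dotDr !dotZr dotNr; ring. Qed.

Lemma polarC i x d : polar i x d = polar i d x.
Proof. by rewrite /polar; ring. Qed.

Lemma polarDr i x d1 d2 : polar i x (d1 + d2) = polar i x d1 + polar i x d2.
Proof. by rewrite /polar rotJD !dotDr; ring. Qed.

Lemma polarZr i x a d : polar i x (a *: d) = a * polar i x d.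
Proof. by rewrite /polar rotJZ !dotZr; ring. Qed.

Lemma polar_diag i d : polar i d d = 2 * meas i d.
Proof. by rewrite /polar /meas; ring. Qed.

Lemma loss_ge0 x : 0 <= loss x.
Proof. by apply: sumr_ge0 => i _; rewrite sqr_ge0. Qed.

Lemma loss_shift x d : exists c3 c4 : R, forall h,
  loss (h *: d + x) =
  loss x + h * dloss x d + h ^+ 2 * d2loss x d + h ^+ 3 * c3 + h ^+ 4 * c4.
Proof.
exists (\sum_(i < m) 2 * polar i x d * meas i d), (\sum_(i < m) meas i d ^+ 2) => h.
rewrite /loss /dloss /d2loss !mulr_sumr -!big_split /=; apply: eq_bigr => i _.
by rewrite /resid meas_shift; ring.
Qed.

Lemma dloss_shift x e d : exists c2 c3 c4 : R, forall h,
  dloss (h *: e + x) d =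
  dloss x d + h * hess x e d + h ^+ 2 * c2 + h ^+ 3 * c3 + h ^+ 4 * c4.
Proof.
exists (\sum_(i < m) 2 * (meas i e * polar i x d + polar i x e * polar i e d)),
  (\sum_(i < m) 2 * (meas i e * polar i e d)), 0 => h.
rewrite /dloss /hess !mulr_sumr mulr0 addr0 -!big_split /=; apply: eq_bigr => i _.
by rewrite /resid meas_shift polar_shift; ring.
Qed.

Lemma dlossDr x d1 d2 : dloss x (d1 + d2) = dloss x d1 + dloss x d2.
Proof. by rewrite /dloss -big_split /=; apply: eq_bigr => i _; rewrite polarDr; ring. Qed.

Lemma dlossZr x a d : dloss x (a *: d) = a * dloss x d.
Proof. by rewrite /dloss mulr_sumr; apply: eq_bigr => i _; rewrite polarZr; ring. Qed.

Lemma hessDl x e1 e2 d : hess x (e1 + e2) d = hess x e1 d + hess x e2 d.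
Proof.
rewrite /hess -big_split /=; apply: eq_bigr => i _.
by rewrite polarDr (polarC i (e1 + e2)) polarDr !(polarC i d); ring.
Qed.

Lemma hessZl x a e d : hess x (a *: e) d = a * hess x e d.
Proof.
rewrite /hess mulr_sumr; apply: eq_bigr => i _.
by rewrite polarZr (polarC i (a *: e)) polarZr (polarC i d); ring.
Qed.

Lemma hessC x e d : hess x e d = hess x d e.
Proof. by apply: eq_bigr => i _; rewrite (polarC i e d); ring. Qed.

Lemma hess_diag x d : hess x d d = 2 * d2loss x d.
Proof. by rewrite /hess /d2loss mulr_sumr; apply: eq_bigr => i _; rewrite polar_diag; ring. Qed.

Lemma loss_rot c s : c ^+ 2 + s ^+ 2 = 1 -> loss (c *: v + s *: J v) = 0.
Proof. by move=> cs1; apply: big1 => i _; rewrite /resid meas_rot cs1 mul1r subrr expr0n. Qed.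

Definition moment4 x1 x2 x3 x4 := \sum_(i < m) P i x1 * P i x2 * P i x3 * P i x4.

Definition cross_energy x y := \sum_(i < m) (P i x * P i y + P i (J x) * P i (J y)) ^+ 2.

Lemma cross_energyE x y : cross_energy x y =
  moment4 x y x y + 2 * moment4 x y (J x) (J y) + moment4 (J x) (J y) (J x) (J y).
Proof.
by rewrite /cross_energy /moment4 mulr_sumr -!big_split /=; apply: eq_bigr => i _; ring.
Qed.

Section SameMeasurements.
Variable w : 'rV[R]_N.
Hypothesis meas_w : forall i, meas i w = meas i v.

Lemma loss_cross u : loss u = cross_energy (u - w) (u + w).
Proof.
apply: eq_bigr => i _; rewrite /resid -meas_w /meas !rotJB !rotJD !dotBr !dotDr.
ring.
Qed.

Lemma d2loss_diff u :
  d2loss u (u - w) = 2 * dloss u (u - w) - 3 * loss u + cross_energy (u - w) (u - w).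
Proof.
rewrite /d2loss /dloss /loss /cross_energy !mulr_sumr -sumrN -!big_split /=.
apply: eq_bigr => i _.
have polar_diff : polar i u (u - w) = resid i u + meas i (u - w).
  by rewrite /resid -meas_w /polar /meas !rotJB !dotBr; ring.
by rewrite polar_diff /meas; ring.
Qed.

Lemma d2loss_target u :
  2 * d2loss u w = 8 * cross_energy u w + dloss u u - 4 * loss u.
Proof.
rewrite /d2loss /dloss /loss /cross_energy !mulr_sumr -sumrN -!big_split /=.
by apply: eq_bigr => i _; rewrite polar_diag /resid -meas_w /polar; ring.
Qed.

End SameMeasurements.
End Loss.

Lemma descent_arith (R : realFieldType) (a b c eDs eDD eUW : R) :
  0 <= a -> 0 <= b -> 0 <= c -> 0 < a + b - 2 * c ->
  6 * (a - b) ^+ 2 + (2 - 4 / 100) * ((a + b - 2 * c) * (a + b + 2 * c)) <= eDs ->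
  eDD <= (8 + 4 / 100) * (a + b - 2 * c) ^+ 2 ->
  eUW <= 6 * c ^+ 2 + (2 + 4 / 100) * (a * b) ->
  eDD - 3 * eDs < 0 \/ 4 * eUW - 2 * eDs < 0.
Proof.
(* The 4/100 are the errors 4 delta of cross_energy_bound at delta = 1/100. *)
move=> a_ge0 b_ge0 c_ge0 X_gt0 bDs bDD bUW.
have Y_gt0 : 0 < a + b + 2 * c by lra.
have XY_gt0 := mulr_gt0 X_gt0 Y_gt0.
have ab2_ge0 := sqr_ge0 (a - b).
have [XY|YX] := lerP (8 * (a + b - 2 * c)) (5 * (a + b + 2 * c)); [left | right].
  have : 0 <= 5 * (a + b + 2 * c) - 8 * (a + b - 2 * c) by lra.
  move=> /(mulr_ge0 (ltW X_gt0)); rewrite expr2 in bDD; lra.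
have c_small : 676 * c ^+ 2 < 9 * (a + b) ^+ 2.
  have : 0 < 3 * (a + b) - 26 * c by lra.
  have : 0 < 3 * (a + b) + 26 * c by lra.
  move=> p1 p2; have := mulr_gt0 p1 p2; rewrite !expr2; lra.
have ab_ge0 := mulr_ge0 a_ge0 b_ge0.
rewrite !expr2 in bDs bDD bUW ab2_ge0 c_small *; nra.
Qed.

Section Concentration.
Variables (R : rcfType) (n m : nat).
Local Notation N := (n + n)%N.
Local Notation J := (@rotJ R n).
Variables (p : 'I_m -> 'rV[R]_N) (v : 'rV[R]_N) (c delta : R).
Hypothesis c_gt0 : 0 < c.
Hypothesis near_isserlis : forall x1 x2 x3 x4 : 'rV[R]_N,
  `|c^-1 * moment4 p x1 x2 x3 x4 - isserlis4 x1 x2 x3 x4|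
    <= delta * (Num.sqrt (dot x1 x1) * Num.sqrt (dot x2 x2)
                * Num.sqrt (dot x3 x3) * Num.sqrt (dot x4 x4)).

Lemma cross_energy_bound (x y : 'rV[R]_N) :
  `|c^-1 * cross_energy p x y
     - (6 * dot x y ^+ 2 - 2 * dot x (J y) ^+ 2 + 2 * (dot x x * dot y y))|
    <= 4 * delta * (dot x x * dot y y).
Proof.
have norm4 (x1 y1 : 'rV[R]_N) : Num.sqrt (dot x1 x1) * Num.sqrt (dot y1 y1)
    * Num.sqrt (dot x1 x1) * Num.sqrt (dot y1 y1) = dot x1 x1 * dot y1 y1.
  transitivity (Num.sqrt (dot x1 x1) ^+ 2 * Num.sqrt (dot y1 y1) ^+ 2); first ring.
  by rewrite !sqr_sqrtr ?dot_ge0.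
have := near_isserlis x y x y; have := near_isserlis x y (J x) (J y).
have := near_isserlis (J x) (J y) (J x) (J y).
rewrite /isserlis4 !dot_rotJ !dot_rotJ_self (dotC y (J x)) dot_rotJl (dotC y x) !norm4.
rewrite cross_energyE !mulrDr !(mulrCA c^-1 2) !ler_norml.
move=> /andP[? ?] /andP[? ?] /andP[? ?]; apply/andP; split; lra.
Qed.

Lemma critical_descent (u w : 'rV[R]_N) : delta <= 1 / 100 ->
  (forall i, meas p i w = meas p i v) -> dot u (J w) = 0 -> 0 <= dot u w ->
  (forall d, dloss p v u d = 0) -> u != w ->
  d2loss p v u (u - w) < 0 \/ d2loss p v u w < 0.
Proof.
move=> delta_small meas_w uJw uw_ge0 crit u_neq_w.
have eX : dot (u - w) (u - w) = dot u u + dot w w - 2 * dot u w.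
  by rewrite !dotBl !dotBr (dotC w u); ring.
have eY : dot (u + w) (u + w) = dot u u + dot w w + 2 * dot u w.
  by rewrite !dotDl !dotDr (dotC w u); ring.
have eDs : dot (u - w) (u + w) = dot u u - dot w w.
  by rewrite dotBl !dotDr (dotC w u); ring.
have eDJs : dot (u - w) (J (u + w)) = 0.
  rewrite rotJD dotBl !dotDr !dot_rotJ_self uJw (dotC w) dot_rotJl uJw; ring.
have X_gt0 : 0 < dot u u + dot w w - 2 * dot u w by rewrite -eX dot_gt0 subr_eq0.
have a_ge0 := dot_ge0 u; have b_ge0 := dot_ge0 w.
have weaken (q e P : R) : 0 <= P -> `|q - e| <= 4 * delta * P ->
    e - 4 / 100 * P <= q <= e + 4 / 100 * P.
  move=> P_ge0; rewrite ler_norml => /andP[lo hi].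
  have dP : 4 * delta * P <= 4 / 100 * P by nra.
  by apply/andP; split; lra.
have Y_ge0 : 0 <= dot u u + dot w w + 2 * dot u w by lra.
have := cross_energy_bound (u - w) (u + w); rewrite eDs eDJs eX eY.
move=> /(weaken _ _ _ (mulr_ge0 (ltW X_gt0) Y_ge0)) /andP[bDs _].
have := cross_energy_bound (u - w) (u - w); rewrite dot_rotJ_self eX.
move=> /(weaken _ _ _ (mulr_ge0 (ltW X_gt0) (ltW X_gt0))) /andP[_ bDD].
have := cross_energy_bound u w; rewrite uJw.
move=> /(weaken _ _ _ (mulr_ge0 a_ge0 b_ge0)) /andP[_ buw].
have c_inv_gt0 : 0 < c^-1 by rewrite invr_gt0.
have [DD_neg|uw_neg] := descent_arith a_ge0 b_ge0 uw_ge0 X_gt0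
  (eDs := c^-1 * cross_energy p (u - w) (u + w))
  (eDD := c^-1 * cross_energy p (u - w) (u - w)) (eUW := c^-1 * cross_energy p u w)
  ltac:(lra) ltac:(lra) ltac:(lra); [left | right].
  rewrite (d2loss_diff meas_w) crit (loss_cross meas_w) -(pmulr_rlt0 _ c_inv_gt0).
  by rewrite mulrDr mulrBr mulr0 mulrCA; lra.
have := d2loss_target meas_w u; rewrite crit (loss_cross meas_w) addr0 => d2w.
rewrite -(pmulr_rlt0 _ c_inv_gt0) -(pmulr_rlt0 _ (ltr0n _ 2)) mulrCA d2w.
by rewrite mulrBr !(mulrCA c^-1); lra.
Qed.
End Concentration.

Section QuarticSign.
Variable R : realFieldType.

Lemma ge0_of_small_perturbation (c K eta : R) (g : R -> R) : 0 < eta ->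
  (forall t, 0 < t < eta -> g t <= K) ->
  (forall t, 0 < t < eta -> 0 <= c + t * g t) -> 0 <= c.
Proof.
move=> eta_gt0 gK cg; rewrite leNgt; apply/negP => c_lt0.
have K1_gt0 : 0 < `|K| + 1 by rewrite ltr_wpDl.
pose t := Num.min (eta / 2) (- c / (2 * (`|K| + 1))).
have t_gt0 : 0 < t by rewrite lt_min !divr_gt0 ?mulr_gt0 // oppr_gt0.
have t_lt : t < eta by rewrite gt_min ltr_pdivrMr //; lra.
have tK : t * `|K| <= - c / 2.
  have : t <= - c / (2 * (`|K| + 1)) by rewrite ge_min lexx orbT.
  rewrite ler_pdivlMr ?mulr_gt0 // => tc; have := normr_ge0 K; nra.
have t_in : 0 < t < eta by rewrite t_gt0 t_lt.
have := cg t t_in; have := gK t t_in.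
have := ler_norm K; nra.
Qed.

Lemma sum3_le_norm (t b0 b1 b2 : R) : 0 < t < 1 ->
  b0 + t * b1 + t ^+ 2 * b2 <= `|b0| + `|b1| + `|b2|.
Proof.
case/andP=> t_gt0 t_lt1; have t2_lt1 : t ^+ 2 < 1 by rewrite expr_lt1 ?ltW.
have := ler_norm b0; have := ler_norm b1; have := ler_norm b2.
have := normr_ge0 b1; have := normr_ge0 b2; have := exprn_gt0 2 t_gt0.
nra.
Qed.

Lemma quartic_local_sign (c1 c2 c3 c4 eta : R) : 0 < eta ->
  (forall h, `|h| < eta -> 0 <= h * c1 + h ^+ 2 * c2 + h ^+ 3 * c3 + h ^+ 4 * c4) ->
  c1 = 0 /\ 0 <= c2.
Proof.
move=> eta_gt0 nonneg.
have eta1_gt0 : 0 < Num.min eta 1 by rewrite lt_min eta_gt0 ltr01.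
have small t : 0 < t < Num.min eta 1 -> [/\ 0 < t < 1, `|t| < eta & `|- t| < eta].
  by case/andP=> t_gt0; rewrite lt_min normrN gtr0_norm // t_gt0 => /andP[-> ->].
have c1_ge0 : 0 <= c1.
  apply: (ge0_of_small_perturbation (g := fun t => c2 + t * c3 + t ^+ 2 * c4)
    eta1_gt0) => t /small[t01 teta _]; first exact: sum3_le_norm.
  rewrite -(pmulr_rge0 _ (andP t01).1) /=.
  have -> : t * (c1 + t * (c2 + t * c3 + t ^+ 2 * c4)) =
    t * c1 + t ^+ 2 * c2 + t ^+ 3 * c3 + t ^+ 4 * c4 by ring.
  exact: nonneg.
have c1_le0 : 0 <= - c1.
  apply: (ge0_of_small_perturbation (g := fun t => c2 + t * - c3 + t ^+ 2 * c4)
    eta1_gt0) => t /small[t01 _ teta]; first exact: sum3_le_norm.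
  rewrite -(pmulr_rge0 _ (andP t01).1) /=.
  have -> : t * (- c1 + t * (c2 + t * - c3 + t ^+ 2 * c4)) =
    (- t) * c1 + (- t) ^+ 2 * c2 + (- t) ^+ 3 * c3 + (- t) ^+ 4 * c4 by ring.
  exact: nonneg.
have c1_0 : c1 = 0 by lra.
split=> //; apply: (ge0_of_small_perturbation (g := fun t => c3 + t * c4 + t ^+ 2 * 0)
  eta1_gt0) => t /small[t01 teta _]; first exact: sum3_le_norm.
rewrite -(pmulr_rge0 _ (andP t01).1) -(pmulr_rge0 _ (andP t01).1) /=.
have -> : t * (t * (c2 + t * (c3 + t * c4 + t ^+ 2 * 0))) =
  t * c1 + t ^+ 2 * c2 + t ^+ 3 * c3 + t ^+ 4 * c4 by rewrite c1_0; ring.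
exact: nonneg.
Qed.
End QuarticSign.

Local Open Scope classical_set_scope.

Section LineRestriction.
Variables (R : realType) (k : nat).
Implicit Types (f : 'rV[R]_k -> R) (u d : 'rV[R]_k).

Lemma local_minimizer_line f u d : local_minimizer f u ->
  exists2 eta : R, 0 < eta & forall h : R, `|h| < eta -> f u <= f (h *: d + u).
Proof.
move=> umin; have line_cvg : (fun h : R => h *: d + u) @ 0 --> u.
  have := cvgD (cvgZ (@cvg_id _ (nbhs (0 : R))) (cvg_cst d)) (cvg_cst u).
  by rewrite scale0r add0r; apply.
have /nbhs_ballP[eta eta_gt0 ball_min] := line_cvg _ umin.
by exists eta => // h h_lt; apply: ball_min; rewrite /ball /= sub0r normrN.
Qed.

Lemma derive_quartic f u e (c1 c2 c3 c4 : R) :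
  (forall h : R, f (h *: e + u) = f u + h * c1 + h ^+ 2 * c2 + h ^+ 3 * c3 + h ^+ 4 * c4) ->
  'D_e f u = c1.
Proof.
move=> f_line; pose g (h : R) := c1 + h * (c2 + h * (c3 + h * c4)).
have g_cvg : g @ 0^' --> c1.
  have -> : c1 = g 0 by rewrite /g mul0r addr0.
  apply: cvg_within_filter; apply: cvgD (cvg_cst _) (cvgM cvg_id _).
  exact: cvgD (cvg_cst _) (cvgM cvg_id (cvgD (cvg_cst _) (cvgM cvg_id (cvg_cst _)))).
apply: cvg_lim => //; apply: cvg_trans g_cvg; apply: near_eq_cvg; near=> h.
have h_neq0 : h != 0 by near: h; exact: nbhs_dnbhs_neq.
rewrite /= f_line -[h^-1 *: _]/(h^-1 * _) /g; field.
Unshelve. all: by end_near.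
Qed.

End LineRestriction.

Local Close Scope classical_set_scope.

Section Tensor.
Variables (R : realType) (N : nat).
Implicit Types (T U : tensor4 R N) (x : 'rV[R]_N).

Lemma tinner_tsub T1 T2 U : tinner (tsub T1 T2) U = tinner T1 U - tinner T2 U.
Proof.
rewrite /tinner -sumrB; apply: eq_bigr => i1 _; rewrite -sumrB; apply: eq_bigr => i2 _.
rewrite -sumrB; apply: eq_bigr => i3 _; rewrite -sumrB; apply: eq_bigr => i4 _.
by rewrite /tsub mulrBl.
Qed.

Lemma tinner_scale a (T : tensor4 R N) U :
  tinner (fun i1 i2 i3 i4 => a * T i1 i2 i3 i4) U = a * tinner T U.
Proof.
rewrite /tinner mulr_sumr; apply: eq_bigr => i1 _; rewrite mulr_sumr.
apply: eq_bigr => i2 _; rewrite mulr_sumr; apply: eq_bigr => i3 _; rewrite mulr_sumr.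
by apply: eq_bigr => i4 _; rewrite mulrA.
Qed.

Lemma tinner_sum m (T : 'I_m -> tensor4 R N) U :
  tinner (fun i1 i2 i3 i4 => \sum_(i < m) T i i1 i2 i3 i4) U =
  \sum_(i < m) tinner (T i) U.
Proof.
rewrite /tinner.
under eq_bigr do under eq_bigr do under eq_bigr do under eq_bigr do rewrite mulr_suml.
under eq_bigr do under eq_bigr do under eq_bigr do rewrite exchange_big.
under eq_bigr do under eq_bigr do rewrite exchange_big.
by under eq_bigr do rewrite exchange_big; rewrite exchange_big.
Qed.

Lemma tinner_touter (p1 p2 p3 p4 x1 x2 x3 x4 : 'rV[R]_N) :
  tinner (touter p1 p2 p3 p4) (touter x1 x2 x3 x4) =
  dot p1 x1 * dot p2 x2 * dot p3 x3 * dot p4 x4.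
Proof.
rewrite /tinner /touter /dot -!mulrA mulr_suml; apply: eq_bigr => i1 _.
rewrite mulr_suml mulr_sumr; apply: eq_bigr => i2 _.
rewrite mulr_suml !mulr_sumr; apply: eq_bigr => i3 _.
by rewrite !mulr_sumr; apply: eq_bigr => i4 _; ring.
Qed.

Lemma sum_diag (F : 'I_N -> 'I_N -> R) :
  \sum_i \sum_j ((i == j)%:R * F i j) = \sum_i F i i.
Proof.
apply: eq_bigr => i _; rewrite (bigD1 i) //= eqxx mul1r big1 ?addr0 // => j.
by rewrite eq_sym => /negbTE ->; rewrite mul0r.
Qed.

Section Pairings.
Variable F : 'I_N -> 'I_N -> 'I_N -> 'I_N -> R.

Lemma sum4_pair12_34 :
  \sum_i1 \sum_i2 \sum_i3 \sum_i4 ((i1 == i2)%:R * ((i3 == i4)%:R * F i1 i2 i3 i4))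
  = \sum_i1 \sum_i3 F i1 i1 i3 i3.
Proof.
under eq_bigr do under eq_bigr do under eq_bigr do rewrite -mulr_sumr.
under eq_bigr do under eq_bigr do rewrite -mulr_sumr.
by rewrite sum_diag; apply: eq_bigr => i1 _; exact: sum_diag.
Qed.

Lemma sum4_pair13_24 :
  \sum_i1 \sum_i2 \sum_i3 \sum_i4 ((i1 == i3)%:R * ((i2 == i4)%:R * F i1 i2 i3 i4))
  = \sum_i1 \sum_i2 F i1 i2 i1 i2.
Proof.
under eq_bigr do rewrite exchange_big.
under eq_bigr do under eq_bigr do under eq_bigr do rewrite -mulr_sumr.
under eq_bigr do under eq_bigr do rewrite -mulr_sumr.
by rewrite sum_diag; apply: eq_bigr => i1 _; exact: sum_diag.
Qed.

Lemma sum4_pair14_23 :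
  \sum_i1 \sum_i2 \sum_i3 \sum_i4 ((i2 == i3)%:R * ((i1 == i4)%:R * F i1 i2 i3 i4))
  = \sum_i1 \sum_i2 F i1 i2 i2 i1.
Proof.
under eq_bigr do under eq_bigr do under eq_bigr do rewrite -mulr_sumr.
under eq_bigr do rewrite sum_diag exchange_big.
under eq_bigr do under eq_bigr do rewrite -mulr_sumr.
by rewrite sum_diag.
Qed.

End Pairings.

Lemma tinner_Stensor x1 x2 x3 x4 :
  tinner (@Stensor R N) (touter x1 x2 x3 x4) = isserlis4 x1 x2 x3 x4.
Proof.
pose F i1 i2 i3 i4 := touter x1 x2 x3 x4 i1 i2 i3 i4.
have S_split i1 i2 i3 i4 : @Stensor R N i1 i2 i3 i4 * F i1 i2 i3 i4 =
    (i1 == i2)%:R * ((i3 == i4)%:R * F i1 i2 i3 i4)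
  + (i1 == i3)%:R * ((i2 == i4)%:R * F i1 i2 i3 i4)
  + (i2 == i3)%:R * ((i1 == i4)%:R * F i1 i2 i3 i4).
  by rewrite /Stensor -!mulnb !natrM; ring.
rewrite /tinner -/F.
under eq_bigr do under eq_bigr do under eq_bigr do under eq_bigr do rewrite S_split.
under eq_bigr do under eq_bigr do under eq_bigr do rewrite !big_split /=.
under eq_bigr do under eq_bigr do rewrite !big_split /=.
under eq_bigr do rewrite !big_split /=.
rewrite !big_split /= sum4_pair12_34 sum4_pair13_24 sum4_pair14_23 /F /touter /isserlis4.
rewrite /dot !mulr_suml; congr (_ + _ + _); apply: eq_bigr => i _;
  by rewrite mulr_sumr; apply: eq_bigr => j _; ring.
Qed.

Lemma enormE x : enorm x = Num.sqrt (dot x x).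
Proof. by rewrite /enorm /dot; under eq_bigr do rewrite expr2. Qed.

Lemma enorm_ge0 x : 0 <= enorm x.
Proof. by rewrite enormE sqrtr_ge0. Qed.

Lemma enorm_eq0 x : (enorm x == 0) = (x == 0).
Proof. by rewrite enormE sqrtr_eq0 le_eqVlt ltNge dot_ge0 orbF dot_eq0. Qed.

Lemma enormZ a x : enorm (a *: x) = `|a| * enorm x.
Proof. by rewrite !enormE dotZl dotZr mulrA -expr2 sqrtrM ?sqr_ge0 // sqrtr_sqr. Qed.

Lemma abs_entry_le_enorm x j : `|x 0 j| <= enorm x.
Proof.
by rewrite enormE -sqrtr_sqr ler_sqrt ?dot_ge0 // sqr_entry_le_dot.
Qed.

Lemma tinner_touterZ T a x1 x2 x3 x4 :
  tinner T (touter (a *: x1) x2 x3 x4) = a * tinner T (touter x1 x2 x3 x4).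
Proof.
rewrite -tinner_scale; apply: eq_bigr => i1 _; apply: eq_bigr => i2 _.
apply: eq_bigr => i3 _; apply: eq_bigr => i4 _; rewrite /touter mxE; ring.
Qed.

Lemma tinner_touter0 T x1 x2 x3 x4 :
  [|| x1 == 0, x2 == 0, x3 == 0 | x4 == 0] -> tinner T (touter x1 x2 x3 x4) = 0.
Proof.
move=> x0; do 4!(apply: big1 => ? _); rewrite /touter.
by case/or4P: x0 => /eqP ->; rewrite mxE; ring.
Qed.

Lemma tinner_touter_bound T x1 x2 x3 x4 :
  `|tinner T (touter x1 x2 x3 x4)| <=
  (\sum_i1 \sum_i2 \sum_i3 \sum_i4 `|T i1 i2 i3 i4|)
    * (enorm x1 * enorm x2 * enorm x3 * enorm x4).
Proof.
rewrite mulr_suml; apply: (le_trans (ler_norm_sum _ _ _)); apply: ler_sum => i1 _.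
rewrite mulr_suml; apply: (le_trans (ler_norm_sum _ _ _)); apply: ler_sum => i2 _.
rewrite mulr_suml; apply: (le_trans (ler_norm_sum _ _ _)); apply: ler_sum => i3 _.
rewrite mulr_suml; apply: (le_trans (ler_norm_sum _ _ _)); apply: ler_sum => i4 _.
rewrite normrM ler_wpM2l // /touter !normrM.
by rewrite !ler_pM ?mulr_ge0 ?normr_ge0 ?abs_entry_le_enorm.
Qed.

Lemma tinner_le_opnorm T x1 x2 x3 x4 :
  enorm x1 * enorm x2 * enorm x3 * enorm x4 = 1 ->
  tinner T (touter x1 x2 x3 x4) <= opnorm T.
Proof.
move=> unit; apply: ub_le_sup; last by exists x1, x2, x3, x4.
exists (\sum_i1 \sum_i2 \sum_i3 \sum_i4 `|T i1 i2 i3 i4|).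
move=> _ [y1 [y2 [y3 [y4 [y_unit ->]]]]].
by rewrite (le_trans (ler_norm _)) // (le_trans (tinner_touter_bound _ _ _ _ _)) // y_unit mulr1.
Qed.

Lemma tinner_touter_opnorm T x1 x2 x3 x4 :
  `|tinner T (touter x1 x2 x3 x4)|
    <= opnorm T * (enorm x1 * enorm x2 * enorm x3 * enorm x4).
Proof.
set E := _ * enorm x4; have [E0|E_neq0] := eqVneq E 0.
  rewrite E0 mulr0 tinner_touter0 ?normr0 //.
  by move/eqP: E0; rewrite /E !mulf_eq0 !enorm_eq0 -!orbA.
have E_gt0 : 0 < E by rewrite lt_def E_neq0 !mulr_ge0 ?enorm_ge0.
have unit s : `|s| = 1 -> s / E * tinner T (touter x1 x2 x3 x4) <= opnorm T.
  move=> s1; rewrite -tinner_touterZ tinner_le_opnorm // enormZ normrM s1 mul1r.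
  by rewrite normfV gtr0_norm // -[RHS](mulVf E_neq0) /E !mulrA.
have := unit 1 (normr1 _); have := unit (-1) (normrN1 _).
rewrite mulN1r mul1r mulNr; set t := tinner _ _ => tE1 tE2.
have -> : t = E * (E^-1 * t) by rewrite mulrA mulfV // mul1r.
rewrite ler_norml; apply/andP; split; nra.
Qed.

End Tensor.

Section MeasurementTensor.
Variables (R : realType) (n m : nat) (a : 'I_m -> 'rV[R[i]]_n) (sigma : R).

Lemma tinner_Ttensor (x1 x2 x3 x4 : 'rV[R]_(n + n)) :
  tinner (Ttensor a sigma) (touter x1 x2 x3 x4) =
  (m%:R * sigma ^+ 4)^-1 * moment4 (fun i => vplus (a i)) x1 x2 x3 x4.
Proof.
rewrite /Ttensor tinner_scale tinner_sum; congr (_ * _).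
by apply: eq_bigr => i _; rewrite -tinner_touter.
Qed.

Lemma near_isserlis_of_opnorm (delta : R) :
  opnorm (tsub (Ttensor a sigma) (@Stensor R (n + n))) <= delta ->
  forall x1 x2 x3 x4 : 'rV[R]_(n + n),
  `|(m%:R * sigma ^+ 4)^-1 * moment4 (fun i => vplus (a i)) x1 x2 x3 x4
      - isserlis4 x1 x2 x3 x4|
    <= delta * (Num.sqrt (dot x1 x1) * Num.sqrt (dot x2 x2)
                * Num.sqrt (dot x3 x3) * Num.sqrt (dot x4 x4)).
Proof.
move=> op_le x1 x2 x3 x4.
rewrite -tinner_Ttensor -tinner_Stensor -tinner_tsub -!enormE.
apply: le_trans (tinner_touter_opnorm _ _ _ _ _) _.
by rewrite ler_wpM2r // !mulr_ge0 ?enorm_ge0.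
Qed.

End MeasurementTensor.

Section Landscape.
Variables (R : realType) (n m : nat).
Local Notation N := (n + n)%N.
Local Notation J := (@rotJ R n).
Variables (p : 'I_m -> 'rV[R]_N) (v : 'rV[R]_N) (c delta : R).
Hypothesis c_gt0 : 0 < c.
Hypothesis delta_small : delta <= 1 / 100.
Hypothesis near_isserlis : forall x1 x2 x3 x4 : 'rV[R]_N,
  `|c^-1 * moment4 p x1 x2 x3 x4 - isserlis4 x1 x2 x3 x4|
    <= delta * (Num.sqrt (dot x1 x1) * Num.sqrt (dot x2 x2)
                * Num.sqrt (dot x3 x3) * Num.sqrt (dot x4 x4)).
Local Notation f := (loss p v).
Implicit Types (x d : 'rV[R]_N).

Lemma derive_loss x d : 'D_d f x = dloss p v x d.
Proof. by have [c3 [c4 /derive_quartic]] := loss_shift p v x d. Qed.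

Lemma hessian_loss x : hessian f x = \matrix_(i, j) hess p v x (evec R i) (evec R j).
Proof.
apply/matrixP => i j; rewrite !mxE.
under eq_fun do rewrite derive_loss.
have [c2 [c3 [c4 shift]]] := dloss_shift p v x (evec R j) (evec R i).
by rewrite (derive_quartic (f := fun w => dloss p v w (evec R i)) shift) hessC.
Qed.

Lemma critical_dloss x : critical_point f x -> forall d, dloss p v x d = 0.
Proof.
move=> grad0 d; rewrite (@linear_expand _ _ (dloss p v x)) ?big1 //.
- by move=> j _; have /rowP/(_ j) := grad0; rewrite !mxE derive_loss => ->; rewrite mulr0.
- exact: dlossDr.
- exact: dlossZr.
Qed.

Lemma local_min_stationary x : local_minimizer f x ->
  (forall d, dloss p v x d = 0) /\ (forall d, 0 <= d2loss p v x d).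
Proof.
move=> xmin; suff sign d : dloss p v x d = 0 /\ 0 <= d2loss p v x d.
  by split=> d; case: (sign d).
have [eta eta_gt0 line_min] := local_minimizer_line d xmin.
have [c3 [c4 shift]] := loss_shift p v x d.
apply: (quartic_local_sign (c3 := c3) (c4 := c4) eta_gt0) => h /line_min.
by rewrite shift; lra.
Qed.

Lemma stationary_dichotomy x : (forall d, dloss p v x d = 0) ->
  (exists a b : R, a ^+ 2 + b ^+ 2 = 1 /\ x = a *: v + b *: J v)
  \/ exists d, d2loss p v x d < 0.
Proof.
move=> crit; have [a [b [ab1 xJw xw_ge0]]] := phase_align x v.
set w := a *: v + b *: J v in xJw xw_ge0 *.
have [->|x_neq_w] := eqVneq x w; first by left; exists a, b.
have meas_w i : meas p i w = meas p i v by rewrite meas_rot ab1 mul1r.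
right; case: (critical_descent c_gt0 near_isserlis delta_small meas_w xJw xw_ge0
  crit x_neq_w) => neg; [exists (x - w) | exists w]; exact: neg.
Qed.

Lemma phase_global_minimizer a b : a ^+ 2 + b ^+ 2 = 1 ->
  global_minimizer f (a *: v + b *: J v).
Proof. by move=> ab1 y; rewrite loss_rot // loss_ge0. Qed.

Lemma local_min_phase x : local_minimizer f x ->
  exists a b : R, a ^+ 2 + b ^+ 2 = 1 /\ x = a *: v + b *: J v.
Proof.
move=> /local_min_stationary[crit d2_ge0].
by case: (stationary_dichotomy crit) => // -[d]; rewrite ltNge d2_ge0.
Qed.

Lemma strict_saddle x : critical_point f x -> ~ local_minimizer f x ->
  exists2 lambda, lambda < 0 & eigenvalue (hessian f x) lambda.
Proof.
move=> /critical_dloss crit notmin.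
case: (stationary_dichotomy crit) => [[a [b [ab1 xE]]]|[d d_neg]].
  by case: notmin; rewrite xE; apply: filterE; exact: phase_global_minimizer.
apply: neg_eigenvalue; first by apply/matrixP => i j; rewrite hessian_loss !mxE hessC.
exists d; rewrite hessian_loss bil_matrix ?hess_diag ?pmulr_rlt0 //.
- exact: hessDl.
- exact: hessZl.
- exact: hessC.
Qed.

End Landscape.

Lemma fobj_loss (R : realType) n m (a : 'I_m -> 'rV[R[i]]_n) (xnat : 'rV[R[i]]_n) :
  fobj a xnat = loss (fun i => vplus (a i)) (vplus xnat).
Proof.
apply: funext => x; apply: eq_bigr => i _.
rewrite qform_Amat csqnorm_cinner vminus_rotJ /resid /meas (dotC x) (dotC x (rotJ _)).
by rewrite dot_rotJl sqrrN.
Qed.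

Theorem theorem1 (R : realType) :
  exists delta0 : R, 0 < delta0 /\
  forall (n m : nat) (a : 'I_m -> 'rV[R[i]]_n) (xnat : 'rV[R[i]]_n) (sigma : R),
    (1 <= n)%N -> (1 <= m)%N -> 0 < sigma ->
    opnorm (tsub (Ttensor a sigma) (@Stensor R (n + n)%N)) <= delta0 ->
    (forall u : 'rV[R]_(n + n),
        local_minimizer (fobj a xnat) u ->
        (exists theta : R, 0 <= theta < 2 * pi /\
            u = vplus ((Complex (cos theta) (sin theta)) *: xnat))
        /\ global_minimizer (fobj a xnat) u)
    /\
    (forall u : 'rV[R]_(n + n),
        critical_point (fobj a xnat) u ->
        ~ local_minimizer (fobj a xnat) u ->
        exists lambda : R, lambda < 0 /\ eigenvalue (hessian (fobj a xnat) u) lambda).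
Proof.
exists (1 / 100); split=> // n m a xnat sigma _ m_gt0 sigma_gt0 op_small.
have c_gt0 : 0 < m%:R * sigma ^+ 4 by rewrite mulr_gt0 ?ltr0n ?exprn_gt0.
have near := near_isserlis_of_opnorm op_small.
rewrite fobj_loss; split=> [u umin | u crit notmin].
  have [c [s [cs1 ->]]] := local_min_phase c_gt0 (lexx _) near umin.
  split; last exact: phase_global_minimizer.
  have [theta [theta_range <- <-]] := cos_sin_surj cs1.
  by exists theta; rewrite vplusZ.
have [lambda lambda_lt0 eig] := strict_saddle c_gt0 (lexx _) near crit notmin.
by exists lambda.
Qed.
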